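(* Fix $\eta>0$ and assume $d\ge2$. There exists a minimizer $\lambda^*$ of $L$ such that $$4L(0)-4L(\lambda^* )+16m^2\eta\|\lambda^*\|_2^2\le G(\eta)^2,\qquad G(\eta):=24md(m+n)\Big(\sqrt\eta\,\|C\|_\infty+\frac{\log d}{\sqrt\eta}\Big).$$
   Context: Let $G=(V,E)$ be a finite undirected graph with $n=|V|$, $m=|E|$, every vertex incident to at least one edge; $N_i=\{e\in E:i\in e\}$. $\chi$ is a finite label set with $d=|\chi|\ge2$. Costs $C_i\in\mathbb{R}^\chi$, $C_e\in\mathbb{R}^{\chi^2}$; $\|C\|_\infty$ is the largest absolute entry; for $e=\{i,j\}$, $x_e=(x_i,x_j)$, $(x_e)_i=x_i$. Dual variables $\lambda=(\lambda_{e,i}(x))_{e\in E,i\in e,x\in\chi}\in\mathbb{R}^{2md}$ and $$L(\lambda)=\frac1\eta\sum_{i\in V}\log\sum_{x\in\chi}\exp\Big(-\eta C_i(x)+\eta\sum_{e\in N_i}\lambda_{e,i}(x)\Big)+\frac1\eta\sum_{e\in E}\log\sum_{x_e\in\chi^2}\exp\Big(-\eta C_e(x_e)-\eta\sum_{i\in e}\lambda_{e,i}((x_e)_i)\Big).$$ *)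

From HB Require Import structures.
From mathcomp Require Import all_boot all_order all_algebra.
From mathcomp Require Import all_classical all_reals all_analysis.
Set Implicit Arguments. Unset Strict Implicit. Unset Printing Implicit Defensive.
Import Order.TTheory GRing.Theory Num.Theory.
Local Open Scope ring_scope.

(* Graph: vertex type V, edge type E; each edge e has two endpoints
   [ep e false] and [ep e true] (an orientation fixing x_e = (x_i, x_j)). *)
Section Defs.
Variables (R : realType) (V E X : finType) (ep : E -> bool -> V).

Definition simple_graph : Prop :=
  (forall e, ep e false != ep e true) /\
  (forall e e', [set ep e false; ep e true] = [set ep e' false; ep e' true] -> e = e').

Definition no_isolated : Prop := forall i : V, exists e b, ep e b = i.

(* dual variables lambda_{e, ep e b}(x) *)
Definition dualv := E -> bool -> X -> R.

Definition zero_dual : dualv := fun _ _ _ => 0.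

Definition sqnorm2 (lam : dualv) : R :=
  \sum_(e : E) \sum_(b : bool) \sum_(x : X) lam e b x ^+ 2.

Definition Cnorm_inf (Cv : V -> X -> R) (Ce : E -> X -> X -> R) : R :=
  Num.max (\big[Num.max/0]_(i : V) \big[Num.max/0]_(x : X) `|Cv i x|)
          (\big[Num.max/0]_(e : E) \big[Num.max/0]_(x : X) \big[Num.max/0]_(y : X) `|Ce e x y|).

Definition Ldual (eta : R) (Cv : V -> X -> R) (Ce : E -> X -> X -> R) (lam : dualv) : R :=
  eta^-1 * \sum_(i : V) ln (\sum_(x : X)
      expR (- eta * Cv i x + eta * \sum_(e : E) \sum_(b : bool | ep e b == i) lam e b x))
  + eta^-1 * \sum_(e : E) ln (\sum_(x : X) \sum_(y : X)
      expR (- eta * Ce e x y - eta * (lam e false x + lam e true y))).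

End Defs.

From HB Require Import structures.
From mathcomp Require Import all_boot all_order all_algebra.
From mathcomp Require Import all_classical all_reals all_analysis.
From mathcomp Require Import ring lra zify.
Set Implicit Arguments. Unset Strict Implicit. Unset Printing Implicit Defensive.
Import Order.TTheory GRing.Theory Num.Theory.
Local Open Scope ring_scope.

(* Writing [lse eta f = eta^-1 * ln (\sum_i exp (eta * f i))], the dual
   function is a sum of [lse] terms, one per vertex and one per edge
   ([LdualE]).  Three elementary properties of [lse] (it dominates each
   [f j], is at most [max f + ln #|I| / eta], and commutes with adding a
   constant) drive the whole argument:
   - subtracting a constant [k e b] from the row [lambda_{e, ep e b}] leaves
     [L] unchanged, so every dual can be normalized to a nonnegative one
     with a zero in every row ([Ldual_normalize]);
   - comparing [L 0] (bounded above) with [L lam] (bounded below by the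
     vertex loads of [lam]) shows that every normalized [lam] with
     [L lam <= L 0] lies in the box [0, R0] with
     [R0 = 2 (n + m) (||C||_oo + ln d / eta)], and yields the bounds on
     [L 0 - L lam] and [||lam||_2^2] ([sublevel_bounds]);
   - [L] is continuous and the box is compact (Tychonoff), so [L] attains
     its minimum on the box, which is a global minimum by the two previous
     points ([Ldual_minimizer]).
   The theorem then follows from these bounds by elementary arithmetic
   ([gap_bound]), using [n <= 2 m] (no isolated vertex) and [ln d >= 1/2]. *)

Definition lse {R : realType} {I : finType} (eta : R) (f : I -> R) : R :=
  eta^-1 * ln (\sum_i expR (eta * f i)).

Section LogSumExp.
Variables (R : realType) (I : finType) (eta : R).
Hypothesis eta_gt0 : 0 < eta.
Implicit Types (f : I -> R) (a : R).

Lemma sum_expR_gt0 f (j : I) : 0 < \sum_i expR (f i).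
Proof.
by rewrite (bigD1 j) //= ltr_pwDl ?expR_gt0 // sumr_ge0 // => i _; exact: expR_ge0.
Qed.

Lemma lse_ge f j : f j <= lse eta f.
Proof.
rewrite /lse ler_pdivlMl // -[X in X <= _]expRK ler_ln ?posrE ?expR_gt0 //;
  last exact: sum_expR_gt0 j.
by rewrite (bigD1 j) //= lerDl sumr_ge0 // => i _; exact: expR_ge0.
Qed.

Lemma lse_le f a (j : I) : (forall i, f i <= a) -> lse eta f <= a + ln #|I|%:R / eta.
Proof.
move=> le_fa.
have card_gt0 : (0 < #|I|%:R :> R) by rewrite ltr0n; apply/card_gt0P; exists j.
rewrite /lse ler_pdivrMl // mulrDr mulrCA divff ?gt_eqF // mulr1 addrC.
rewrite -[X in _ + X]expRK -lnM ?posrE ?expR_gt0 //.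
rewrite ler_ln ?posrE ?mulr_gt0 ?expR_gt0 //; last exact: sum_expR_gt0 j.
rewrite mulr_natl -sumr_const; apply: ler_sum => i _.
by rewrite ler_expR ler_pM2l.
Qed.

Lemma lse_shift f a (j : I) : lse eta (fun i => f i + a) = lse eta f + a.
Proof.
rewrite /lse; under eq_bigr do rewrite mulrDr expRD.
rewrite -mulr_suml lnM ?posrE ?expR_gt0 //; last exact: sum_expR_gt0 j.
by rewrite expRK mulrDr mulKf ?gt_eqF.
Qed.

End LogSumExp.

Lemma term_le_sum (R : numDomainType) (I : finType) (F : I -> R) (j : I) :
  (forall i, 0 <= F i) -> F j <= \sum_i F i.
Proof. by move=> F_ge0; rewrite (bigD1 j) //= lerDl sumr_ge0. Qed.

Lemma sum_over_endpoints (M : nmodType) (V E : finType) (ep : E -> bool -> V)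
    (F : E -> bool -> M) :
  \sum_(i : V) \sum_(e : E) \sum_(b : bool | ep e b == i) F e b
  = \sum_(e : E) \sum_(b : bool) F e b.
Proof.
under eq_bigr do under eq_bigr do rewrite big_mkcond.
rewrite exchange_big; apply: eq_bigr => e _.
rewrite exchange_big; apply: eq_bigr => b _.
by rewrite -big_mkcond (big_pred1 (ep e b)) // => i; rewrite eq_sym.
Qed.

Section CostNorm.
Variables (R : realType) (V E X : finType).
Variables (Cv : V -> X -> R) (Ce : E -> X -> X -> R).

Lemma Cnorm_ge0 : 0 <= Cnorm_inf Cv Ce.
Proof. by rewrite /Cnorm_inf le_max bigmax_ge_id. Qed.

Lemma Cv_abs_le i x : `|Cv i x| <= Cnorm_inf Cv Ce.
Proof.
rewrite /Cnorm_inf le_max; apply/orP; left.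
by apply: (bigmax_sup i) => //; exact: le_bigmax.
Qed.

Lemma Ce_abs_le e x y : `|Ce e x y| <= Cnorm_inf Cv Ce.
Proof.
rewrite /Cnorm_inf le_max; apply/orP; right.
apply: (bigmax_sup e) => //; apply: (bigmax_sup x) => //.
exact: le_bigmax.
Qed.

End CostNorm.

Lemma LdualE (R : realType) (V E X : finType) (ep : E -> bool -> V)
    (eta : R) (Cv : V -> X -> R) (Ce : E -> X -> X -> R) (lam : dualv R E X) :
  Ldual ep eta Cv Ce lam =
    \sum_(i : V) lse eta (fun x =>
        \sum_(e : E) \sum_(b : bool | ep e b == i) lam e b x - Cv i x)
  + \sum_(e : E) lse eta (fun p : X * X =>
        - Ce e p.1 p.2 - (lam e false p.1 + lam e true p.2)).
Proof.
rewrite /Ldual /lse !mulr_sumr; congr (_ + _); apply: eq_bigr.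
- by move=> i _; congr (_ * ln _); apply: eq_bigr => x _; congr expR; ring.
- move=> e _; rewrite pair_bigA; congr (_ * ln _).
  by apply: eq_bigr => -[x y] _; congr expR; ring.
Qed.

Lemma sqnorm2_le (R : realType) (E X : finType) (lam : dualv R E X) (B : R) :
  0 <= B -> (forall e b x, 0 <= lam e b x) -> (forall e b x, lam e b x <= B) ->
  (forall x, \sum_(e : E) \sum_(b : bool) lam e b x <= B) ->
  sqnorm2 lam <= #|X|%:R * B ^+ 2.
Proof.
move=> B_ge0 lam_ge0 lam_le column_le.
apply: (@le_trans _ _ (\sum_(e : E) \sum_(b : bool) \sum_(x : X) B * lam e b x)).
  rewrite /sqnorm2; apply: ler_sum => e _; apply: ler_sum => b _.
  by apply: ler_sum => x _; rewrite expr2; apply: ler_wpM2r.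
under eq_bigr do under eq_bigr do rewrite -mulr_sumr.
under eq_bigr do rewrite -mulr_sumr.
rewrite -mulr_sumr expr2 [X in _ <= X]mulrCA; apply: ler_wpM2l => //.
under eq_bigr do rewrite exchange_big; rewrite exchange_big /=.
apply: le_trans (ler_sum _ (fun x _ => column_le x)) _.
by rewrite sumr_const mulr_natl.
Qed.

(* Closure rules for continuity of real functions on a topological space,
   stated for whole functions so that they compose by [apply]. *)
Section Continuity.
Variables (R : realType) (T : topologicalType).

Lemma continuous_cstf (a : R^o) : continuous (fun _ : T => a).
Proof. by move=> t; apply: cvg_cst. Qed.

Lemma continuous_addf (f g : T -> R^o) :
  continuous f -> continuous g -> continuous (fun t => f t + g t).
Proof. by move=> f_cont g_cont t; exact: (continuousD (f_cont t) (g_cont t)). Qed.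

Lemma continuous_subf (f g : T -> R^o) :
  continuous f -> continuous g -> continuous (fun t => f t - g t).
Proof. by move=> f_cont g_cont t; exact: (continuousB (f_cont t) (g_cont t)). Qed.

Lemma continuous_mulf (f g : T -> R^o) :
  continuous f -> continuous g -> continuous (fun t => f t * g t).
Proof. by move=> f_cont g_cont t; exact: (continuousM (f_cont t) (g_cont t)). Qed.

Lemma continuous_sum (I : Type) (r : seq I) (P : pred I) (F : I -> T -> R^o) :
  (forall i, continuous (F i)) -> continuous (fun t => \sum_(i <- r | P i) F i t).
Proof.
move=> F_cont; apply: continuous_big => [|i _]; [exact: add_continuous | exact: F_cont].
Qed.

Lemma continuous_expf (f : T -> R^o) :
  continuous f -> continuous (fun t => expR (f t) : R^o).
Proof.
by move=> f_cont t; apply: (continuous_comp (f_cont t)); exact: continuous_expR.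
Qed.

Lemma continuous_lnf (f : T -> R^o) : continuous f -> (forall t, 0 < f t) ->
  continuous (fun t => ln (f t) : R^o).
Proof.
by move=> f_cont f_gt0 t; apply: (continuous_comp (f_cont t)); exact: continuous_ln.
Qed.

Lemma continuous_lse (I : finType) (eta : R) (i0 : I) (F : T -> I -> R^o) :
  (forall i, continuous (fun t => F t i)) -> continuous (fun t => lse eta (F t) : R^o).
Proof.
move=> F_cont; rewrite /lse; apply: continuous_mulf; first exact: continuous_cstf.
apply: continuous_lnf => [|t]; last exact: sum_expR_gt0 i0.
apply: continuous_sum => i; apply: continuous_expf.
by apply: continuous_mulf; [exact: continuous_cstf | exact: F_cont].
Qed.

End Continuity.

Definition real_power (R : realType) (I : Type) : topologicalType :=
  prod_topology (fun _ : I => R^o).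

Lemma exists_min_box (R : realType) (I : finType) (F : real_power R I -> R^o) (M : R) :
  0 <= M -> continuous F ->
  exists2 g : I -> R, (forall i, 0 <= g i <= M) &
     forall h : I -> R, (forall i, 0 <= h i <= M) -> F g <= F h.
Proof.
move=> M_ge0 F_cont.
pose box := [set f : real_power R I | forall i, `[0, M]%classic (f i)]%classic.
have box_compact : compact box.
  exact: (@tychonoff I (fun _ => R^o) (fun _ => `[0, M]%classic)
            (fun _ => @segment_compact R _ _)).
have box_n0 : (box !=set0)%classic by exists (fun _ => 0) => i /=; rewrite in_itv /= lexx.
have [g g_box g_min] :=
  compact_EVT_min box_n0 box_compact (continuous_subspaceT F_cont).
exists g => [i | h h_box]; first by move: g_box; rewrite inE => /(_ i); rewrite /= in_itv.
by apply: g_min; rewrite inE => i /=; rewrite in_itv h_box.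
Qed.

Section DualBounds.
Variables (R : realType) (V E X : finType) (ep : E -> bool -> V).
Variables (Cv : V -> X -> R) (Ce : E -> X -> X -> R) (eta : R) (x0 : X).
Hypothesis eta_gt0 : 0 < eta.

Local Notation L := (Ldual ep eta Cv Ce).
Local Notation L0 := (Ldual ep eta Cv Ce (@zero_dual R E X)).
Local Notation c := (Cnorm_inf Cv Ce).
Local Notation N := (#|V|%:R + #|E|%:R : R).
Local Notation u := (ln #|X|%:R / eta).
Local Notation load lam i x := (\sum_(e : E) \sum_(b : bool | ep e b == i) lam e b x).

Let card_X_gt0 : (0 < #|X|)%N.
Proof. by apply/card_gt0P; exists x0. Qed.

Let u_ge0 : 0 <= u.
Proof. by apply: divr_ge0; [apply: ln_ge0; rewrite (ler_nat R 1) | exact: ltW]. Qed.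

Let N_mulE (a : R) : N * a = \sum_(i : V) a + \sum_(e : E) a.
Proof. by rewrite !sumr_const mulrDl !mulr_natl. Qed.

(* Gauge invariance: shifting each row [lam e b] by a constant moves the
   vertex terms down and the edge terms up by the same total amount. *)
Lemma Ldual_shift (lam : dualv R E X) (k : E -> bool -> R) :
  L (fun e b x => lam e b x - k e b) = L lam.
Proof.
rewrite !LdualE.
have vertex i : lse eta (fun x => load (fun e b x => lam e b x - k e b) i x - Cv i x)
    = lse eta (fun x => load lam i x - Cv i x)
      - \sum_(e : E) \sum_(b : bool | ep e b == i) k e b.
  rewrite -(lse_shift eta_gt0 _ _ x0); congr lse; apply: funext => x.
  by under eq_bigr do rewrite sumrB; rewrite sumrB; ring.
have edge e : lse eta (fun p : X * X => - Ce e p.1 p.2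
      - (lam e false p.1 - k e false + (lam e true p.2 - k e true)))
    = lse eta (fun p : X * X => - Ce e p.1 p.2 - (lam e false p.1 + lam e true p.2))
      + (k e false + k e true).
  by rewrite -(lse_shift eta_gt0 _ _ (x0, x0)); congr lse; apply: funext => p; ring.
rewrite (eq_bigr _ (fun i _ => vertex i)) (eq_bigr _ (fun e _ => edge e)).
rewrite !big_split /= sumrN (sum_over_endpoints ep (fun e b => k e b)).
by rewrite [X in _ - X]exchange_big big_bool /=; ring.
Qed.

Lemma Ldual_normalize (lam : dualv R E X) :
  exists lam' : dualv R E X, [/\ (forall e b x, 0 <= lam' e b x),
    (forall e b, exists x, lam' e b x = 0) & L lam' = L lam].
Proof.
pose xmin e b := [arg min_(x < x0) lam e b x]%O.
have lam_min e b x : lam e b (xmin e b) <= lam e b x.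
  by rewrite /xmin; case: arg_minP => // y _; apply.
exists (fun e b x => lam e b x - lam e b (xmin e b)); split.
- by move=> e b x; rewrite subr_ge0.
- by move=> e b; exists (xmin e b); rewrite subrr.
- exact: (Ldual_shift lam (fun e b => lam e b (xmin e b))).
Qed.

Lemma Ldual_zero_le : L0 <= N * (c + 2 * u).
Proof.
have vertex i : lse eta (fun x => load (@zero_dual R E X) i x - Cv i x) <= c + 2 * u.
  apply: le_trans (lse_le eta_gt0 (a := c) x0 _) _.
    move=> x; rewrite big1 ?sub0r => [|e _]; last by rewrite big1.
    by apply: ler_normlW; rewrite normrN Cv_abs_le.
  by rewrite lerD2l mulr_natl mulr2n lerDl u_ge0.
have edge e : lse eta (fun p : X * X => - Ce e p.1 p.2
    - (@zero_dual R E X e false p.1 + @zero_dual R E X e true p.2)) <= c + 2 * u.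
  apply: le_trans (lse_le eta_gt0 (a := c) (x0, x0) _) _.
    move=> p; rewrite /zero_dual addr0 subr0.
    by apply: ler_normlW; rewrite normrN Ce_abs_le.
  by rewrite card_prod natrM lnM ?posrE ?ltr0n ?card_X_gt0 // mulrDl mulr_natl mulr2n.
rewrite LdualE N_mulE.
by apply: lerD; apply: ler_sum => ? _; [exact: vertex | exact: edge].
Qed.

Lemma Ldual_ge_load (lam : dualv R E X) (phi : V -> X) :
  (forall e b, exists x, lam e b x = 0) ->
  \sum_(i : V) load lam i (phi i) - N * c <= L lam.
Proof.
move=> lam_zero; rewrite LdualE N_mulE opprD addrA -sumrB -sumrN.
apply: lerD; apply: ler_sum.
- move=> i _; apply: le_trans (lse_ge eta_gt0 _ (phi i)); rewrite lerD2l lerN2.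
  exact: ler_normlW (Cv_abs_le Cv Ce i (phi i)).
- move=> e _; have [[xe lam_xe] [ye lam_ye]] := (lam_zero e false, lam_zero e true).
  apply: le_trans (lse_ge eta_gt0 _ (xe, ye)) => /=.
  by rewrite lam_xe lam_ye addr0 subr0 lerN2; exact: ler_normlW (Ce_abs_le Cv Ce e xe ye).
Qed.

(* The side of the box containing the normalized sublevel set {L <= L 0}. *)
Definition dual_radius : R := 2 * N * (c + u).

Lemma dual_radius_ge0 : 0 <= dual_radius.
Proof. by rewrite /dual_radius !mulr_ge0 ?addr_ge0 ?Cnorm_ge0 ?u_ge0. Qed.

(* A normalized dual at least as good as zero has entries, squared norm and
   dual gap controlled by [dual_radius]: every vertex load is at most
   [L lam + N c <= L 0 + N c <= dual_radius], and each entry lies in the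
   load of one of its endpoints. *)
Lemma sublevel_bounds (lam : dualv R E X) :
  (forall e b x, 0 <= lam e b x) -> (forall e b, exists x, lam e b x = 0) ->
  L lam <= L0 ->
  [/\ forall e b x, lam e b x <= dual_radius,
      sqnorm2 lam <= #|X|%:R * dual_radius ^+ 2
    & L0 - L lam <= dual_radius].
Proof.
move=> lam_ge0 lam_zero le_L0.
have radiusE : N * (c + 2 * u) + N * c = dual_radius by rewrite /dual_radius; ring.
have load_le phi : \sum_(i : V) load lam i (phi i) <= dual_radius.
  rewrite -radiusE -lerBlDr (le_trans (Ldual_ge_load phi lam_zero)) //.
  exact: le_trans le_L0 Ldual_zero_le.
have column_le x : \sum_(e : E) \sum_(b : bool) lam e b x <= dual_radius.
  by rewrite -(sum_over_endpoints ep (fun e b => lam e b x)); exact: (load_le (fun=> x)).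
have entry_le e b x : lam e b x <= dual_radius.
  apply: le_trans (column_le x); apply: le_trans (term_le_sum b (lam_ge0 e ^~ x)) _.
  by apply: (term_le_sum (F := fun e => \sum_(b : bool) lam e b x)) => e';
    apply: sumr_ge0.
split => //; first exact: sqnorm2_le dual_radius_ge0 lam_ge0 entry_le column_le.
have := Ldual_ge_load (fun=> x0) lam_zero.
have : 0 <= \sum_(i : V) load lam i x0.
  by apply: sumr_ge0 => i _; apply: sumr_ge0 => e _; apply: sumr_ge0.
by have := Ldual_zero_le; rewrite -radiusE; lra.
Qed.

Definition dual_of_fun (g : E * bool * X -> R) : dualv R E X := fun e b x => g (e, b, x).

Lemma Ldual_continuous :
  continuous (fun g : real_power R (E * bool * X) => L (dual_of_fun g) : R^o).
Proof.
have coord p : continuous (fun g : real_power R (E * bool * X) => g p : R^o).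
  exact: proj_continuous.
rewrite (funext (fun g : real_power R (E * bool * X) =>
  LdualE ep eta Cv Ce (dual_of_fun g))).
apply: continuous_addf; apply: continuous_sum.
- move=> i; apply: (continuous_lse x0) => x.
  apply: continuous_subf; last exact: continuous_cstf.
  by apply: continuous_sum => e; apply: continuous_sum => b; exact: coord.
- move=> e; apply: (continuous_lse (x0, x0)) => p.
  apply: continuous_subf; first exact: continuous_cstf.
  by apply: continuous_addf; exact: coord.
Qed.

(* [L] has a global minimizer, which may be taken normalized: minimize over
   the box [[0, dual_radius]]; any competitor is either worse than zero or,
   once normalized, lies in the box. *)
Lemma Ldual_minimizer : exists lam : dualv R E X,
  [/\ forall mu, L lam <= L mu, (forall e b x, 0 <= lam e b x)
    & forall e b, exists x, lam e b x = 0].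
Proof.
have [g g_box g_min] := exists_min_box dual_radius_ge0 Ldual_continuous.
have [lam [lam_ge0 lam_zero L_lam]] := Ldual_normalize (dual_of_fun g).
exists lam; split => // mu; rewrite L_lam.
have [mu' [mu'_ge0 mu'_zero <-]] := Ldual_normalize mu.
have [le_mu'_0 | gt_mu'_0] := leP (L mu') L0.
- have [mu'_le _ _] := sublevel_bounds mu'_ge0 mu'_zero le_mu'_0.
  apply: (g_min (fun p => mu' p.1.1 p.1.2 p.2)) => -[[e b] x].
  by rewrite mu'_ge0 mu'_le.
- apply: le_trans (ltW gt_mu'_0); apply: (g_min (fun=> 0)) => _.
  by rewrite lexx dual_radius_ge0.
Qed.

End DualBounds.

Lemma card_vertices_le (V E : finType) (ep : E -> bool -> V) :
  no_isolated ep -> (#|V| <= 2 * #|E|)%N.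
Proof.
move=> no_iso.
have cover : [set: V] \subset [set ep p.1 p.2 | p in [set: E * bool]].
  apply/fintype.subsetP => i _; have [e [b <-]] := no_iso i.
  by apply/imsetP; exists (e, b); rewrite ?inE.
have := leq_trans (subset_leq_card cover) (leq_imset_card _ _).
by rewrite !cardsT card_prod card_bool mulnC.
Qed.

Lemma card_sum_le (n m : nat) : (n <= 2 * m)%N -> (n + m <= m ^ 2 * (n + m) ^ 2)%N.
Proof. by case: m => [|m] le_nm; nia. Qed.

(* [ln d >= 1 - 1/d >= 1/2] for [d >= 2]. *)
Lemma ln_ge_half (R : realType) (d : nat) : (2 <= d)%N -> 1 / 2 <= ln (d%:R : R).
Proof.
move=> d_ge2; have d_gt0 : (0 : R) < d%:R by rewrite ltr0n; lia.
have inv_gt0 : (0 : R) < d%:R^-1 by rewrite invr_gt0.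
have inv_le : d%:R^-1 <= (2 : R)^-1 by rewrite lef_pV2 ?posrE // (ler_nat R 2).
have : - ln (d%:R : R) <= d%:R^-1 - 1.
  by rewrite -lnV ?posrE // -{1}(subrKC 1 d%:R^-1); apply: le_ln1Dx; lra.
lra.
Qed.

Lemma sqrt_split (R : realType) (eta c l : R) : 0 < eta ->
  Num.sqrt eta * c + l / Num.sqrt eta = Num.sqrt eta * (c + l / eta).
Proof.
move=> eta_gt0; have s_gt0 : 0 < Num.sqrt eta by rewrite sqrtr_gt0.
have -> : l / eta = l / Num.sqrt eta ^+ 2 by rewrite sqr_sqrtr // ltW.
by field; exact: lt0r_neq0.
Qed.

(* The final arithmetic: with [A <= 2 N P] (dual gap), [S <= d (2 N P)^2]
   (squared norm), [eta P >= 1/2], [d >= 2] and [N <= m^2 N^2], the quantity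
   of the theorem is at most [(24 m d N)^2 eta P^2]. *)
Lemma gap_bound (R : realType) (mm N dd eta P A S : R) :
  0 < eta -> 0 <= P -> 1 <= 2 * eta * P -> 2 <= dd -> 0 <= N -> N <= mm ^+ 2 * N ^+ 2 ->
  A <= 2 * N * P -> S <= dd * (2 * N * P) ^+ 2 ->
  4 * A + 16 * mm ^+ 2 * eta * S <= (24 * mm * dd * N) ^+ 2 * eta * P ^+ 2.
Proof.
move=> eta_gt0 P_ge0 etaP_ge dd_ge2 N_ge0 N_le A_le S_le.
pose Q := eta * P ^+ 2; pose W := mm ^+ 2 * N ^+ 2 * Q.
have Q_ge0 : 0 <= Q by rewrite mulr_ge0 ?sqr_ge0 ?ltW.
have W_ge0 : 0 <= W by rewrite mulr_ge0 // mulr_ge0 ?sqr_ge0.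
have gap_term : 4 * A <= 16 * W.
  have NP_ge0 : 0 <= N * P by rewrite mulr_ge0.
  have := ler_wpM2l NP_ge0 etaP_ge; rewrite mulr1.
  have -> : N * P * (2 * eta * P) = 2 * (N * Q) by rewrite /Q; ring.
  by have := ler_wpM2r Q_ge0 N_le; rewrite -/W; lra.
have norm_term : 16 * mm ^+ 2 * eta * S <= 64 * dd * W.
  have coef_ge0 : 0 <= 16 * mm ^+ 2 * eta by have := sqr_ge0 mm; nra.
  have -> : 64 * dd * W = 16 * mm ^+ 2 * eta * (dd * (2 * N * P) ^+ 2).
    by rewrite /W /Q; ring.
  by apply: ler_wpM2l.
have coef_le : 16 + 64 * dd <= 576 * dd ^+ 2 by nra.
have := ler_wpM2r W_ge0 coef_le.
have -> : (24 * mm * dd * N) ^+ 2 * eta * P ^+ 2 = 576 * dd ^+ 2 * W.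
  by rewrite /W /Q; ring.
lra.
Qed.

Theorem lemma7 (R : realType) (V E X : finType) (ep : E -> bool -> V)
  (Cv : V -> X -> R) (Ce : E -> X -> X -> R) (eta : R) :
  simple_graph ep -> no_isolated ep -> (2 <= #|X|)%N -> 0 < eta ->
  let n := #|V| in let m := #|E| in let d := #|X| in
  let G := 24 * m%:R * d%:R * (m + n)%:R *
           (Num.sqrt eta * Cnorm_inf Cv Ce + ln d%:R / Num.sqrt eta) in
  exists lam : dualv R E X,
    (forall mu : dualv R E X, Ldual ep eta Cv Ce lam <= Ldual ep eta Cv Ce mu) /\
    4 * Ldual ep eta Cv Ce (@zero_dual R E X) - 4 * Ldual ep eta Cv Ce lam
      + 16 * (m%:R) ^+ 2 * eta * sqnorm2 lam <= G ^+ 2.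
Proof.
move=> _ no_iso d_ge2 eta_gt0 n m d G.
have /card_gt0P[x0 _] : (0 < #|X|)%N by apply: leq_trans d_ge2.
have [lam [lam_min lam_ge0 lam_zero]] := Ldual_minimizer ep Cv Ce x0 eta_gt0.
have [_ norm_le gap_le] := sublevel_bounds x0 eta_gt0 lam_ge0 lam_zero (lam_min _).
exists lam; split => //.
have ln_d_ge : 1 / 2 <= ln (d%:R : R) := ln_ge_half R d_ge2.
set P := Cnorm_inf Cv Ce + ln d%:R / eta.
have etaP : eta * P = eta * Cnorm_inf Cv Ce + ln d%:R.
  by rewrite /P mulrDr mulrCA divff ?mulr1 ?gt_eqF.
have eta_c_ge0 : 0 <= eta * Cnorm_inf Cv Ce.
  by apply: mulr_ge0; [exact: ltW | exact: Cnorm_ge0].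
have -> : G ^+ 2 = (24 * m%:R * d%:R * (n%:R + m%:R)) ^+ 2 * eta * P ^+ 2.
  by rewrite /G sqrt_split // natrD [m%:R + _]addrC !exprMn sqr_sqrtr ?ltW // mulrA.
rewrite -mulrBr; apply: gap_bound => //.
- by rewrite addr_ge0 ?Cnorm_ge0 // divr_ge0 ?ltW //; lra.
- by rewrite -mulrA etaP; lra.
- by rewrite (ler_nat R 2).
- have := card_sum_le (card_vertices_le no_iso).
  by rewrite -(ler_nat R) natrM !natrX natrD.
Qed.
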